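(* Let $\phi$ be a circuit all of whose constraints $F_v$ are even-windable. Then the signature $[\![\phi]\!]$ is even-windable.
   Context: For $x,y\in\{0,1\}^J$, $x\oplus y$ is coordinatewise addition mod 2, and $\mathbf S$ is the characteristic vector of $S\subseteq J$. For $z\in\{0,1\}^J$, $\mathrm{Match}(z)$ is the set of partitions of $\{i:z_i=1\}$ into pairs. $F:\{0,1\}^J\to\mathbb{Q}_{\ge0}$ is even-windable if there exist $B(x,y,M)\ge0$ for all $x,y\in\{0,1\}^J$, $M\in\mathrm{Match}(x\oplus y)$, with (EW1) $F(x)F(y)=\sum_{M\in\mathrm{Match}(x\oplus y)}B(x,y,M)$ for all $x,y$, and (EW2) $B(x,y,M)=B(x\oplus\mathbf S,y\oplus\mathbf S,M)$ for all $x,y$ and all $S\in M\in\mathrm{Match}(x\oplus y)$. A circuit $\phi$ consists of: a finite set $J$ of incidences; a finite set $V$ of vertices with sets $J_v$ partitioning $J$; a set $A\subseteq J$ of external edges; a partition $E$ of $J\setminus A$ into pairs (internal edges); and constraints $F_v:\{0,1\}^{J_v}\to\mathbb{Q}_{\ge0}$. An assignment is $x\in\{0,1\}^J$ with $x_i=x_j$ for all $\{i,j\}\in E$; $\mathrm{wt}_\phi(x)=\prod_vF_v(x|_{J_v})$; the signature is $[\![\phi]\!]:\{0,1\}^A\to\mathbb{Q}_{\ge0}$, $[\![\phi]\!](x)=\sum\mathrm{wt}_\phi(x')$ over assignments $x'$ extending $x$. *)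

From HB Require Import structures.
From mathcomp Require Import all_boot all_order all_algebra.
Set Implicit Arguments. Unset Strict Implicit. Unset Printing Implicit Defensive.
Import Order.TTheory GRing.Theory Num.Theory.
Local Open Scope ring_scope.

Definition bxor (I : finType) (x y : {ffun I -> bool}) : {ffun I -> bool} :=
  [ffun i => x i (+) y i].

Definition chi (I : finType) (S : {set I}) : {ffun I -> bool} :=
  [ffun i => i \in S].

Definition Match (I : finType) (z : {ffun I -> bool}) : {set {set {set I}}} :=
  [set M : {set {set I}} | partition M [set i | z i] &&
                           [forall S in M, #|S| == 2]].

Definition even_windable (I : finType) (F : {ffun I -> bool} -> rat) : Prop :=
  (forall x, 0 <= F x) /\
  exists B : {ffun I -> bool} -> {ffun I -> bool} -> {set {set I}} -> rat,
    [/\ (forall x y M, M \in Match (bxor x y) -> 0 <= B x y M),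
        (forall x y, F x * F y = \sum_(M in Match (bxor x y)) B x y M) &
        (forall x y M S, M \in Match (bxor x y) -> S \in M ->
           B x y M = B (bxor x (chi S)) (bxor y (chi S)) M)].

(* incidences at vertex v : J_v = {j | vert j = v} *)
Definition Jv (J V : finType) (vert : J -> V) (v : V) : predArgType :=
  {j : J | vert j == v}.

Definition Aext (J : finType) (A : {set J}) : predArgType := {j : J | j \in A}.

Definition restr (J V : finType) (vert : J -> V) (x : {ffun J -> bool}) (v : V)
  : {ffun Jv vert v -> bool} := [ffun j : Jv vert v => x (val j)].

Definition internal_edges (J : finType) (A : {set J}) (E : {set {set J}}) : Prop :=
  partition E (~: A) /\ forall e, e \in E -> #|e| = 2.

Definition is_assignment (J : finType) (E : {set {set J}}) (x : {ffun J -> bool})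
  : bool := [forall e in E, forall i in e, forall j in e, x i == x j].

Definition wt (J V : finType) (vert : J -> V)
  (F : forall v : V, {ffun Jv vert v -> bool} -> rat) (x : {ffun J -> bool}) : rat :=
  \prod_(v : V) F v (restr vert x v).

Definition signature (J V : finType) (vert : J -> V) (A : {set J})
  (E : {set {set J}}) (F : forall v : V, {ffun Jv vert v -> bool} -> rat)
  (xa : {ffun Aext A -> bool}) : rat :=
  \sum_(x : {ffun J -> bool} | is_assignment E x &&
          [forall j : Aext A, x (val j) == xa j]) wt F x.

From HB Require Import structures.
From mathcomp Require Import all_boot all_order all_algebra.
Set Implicit Arguments. Unset Strict Implicit. Unset Printing Implicit Defensive.
Import Order.TTheory GRing.Theory Num.Theory.
Local Open Scope ring_scope.

(* We handle functions on the whole cube {0,1}^J that only depend on a set D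
   of coordinates, with the relative notion [windable_on D G], in which the
   windings of x and y are the pairings of the coordinates of D where x and y
   differ.  The signature of a circuit arises from its constraints by two
   operations, and windable_on is stable under both:
   - the product of functions depending on disjoint sets D1, D2 is windable
     on D1 :|: D2: a winding of the product is a union of windings;
   - summing over the common value of two coordinates i, j of D (contracting
     an internal edge) gives a function windable on D :\ i :\ j: a winding of
     the contraction is obtained from a winding of the original function by
     deleting i and j, merging the blocks of i and j if they differ.  The theorem follows: the weight of a circuit is windable on J
   (a product over the vertices), contracting all internal edges yields the
   signature, extended to J, windable on A, and transferring back to the
   external incidences gives the claim. *)

Section Pairings.
Variable T : finType.
Implicit Types (M : {set {set T}}) (P S : {set T}) (k : T).

Definition pairing M P : Prop :=
  [/\ forall S, S \in M -> #|S| = 2%N /\ S \subset P,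
      forall k, k \in P -> exists2 S, S \in M & k \in S &
      forall S1 S2 k, S1 \in M -> S2 \in M -> k \in S1 -> k \in S2 -> S1 = S2].

Lemma pairingP M P :
  (partition M P && [forall S in M, #|S| == 2]) <-> pairing M P.
Proof.
split.
- case/andP=> /and3P[/eqP cov triv _] /forall_inP card2; split.
  + move=> S SM; split; first exact/eqP/card2.
    by rewrite -cov; apply: bigcup_sup SM.
  + by move=> k; rewrite -cov => /bigcupP[S SM kS]; exists S.
  + move=> S1 S2 k S1M S2M k1 k2; apply/eqP; apply: contraTT isT => neq.
    by move/disjointFr: (trivIsetP triv S1 S2 S1M S2M neq) => /(_ k k1); rewrite k2.
- case=> blocks cover uniq_block; apply/andP; split; last first.
    by apply/forall_inP => S /blocks[-> _].
  apply/and3P; split.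
  + rewrite eqEsubset; apply/andP; split; first by apply/bigcupsP => S /blocks[].
    by apply/subsetP => k /cover[S SM kS]; apply/bigcupP; exists S.
  + apply/trivIsetP => S1 S2 S1M S2M neq; apply/pred0P => k /=.
    apply/negP => /andP[k1 k2].
    by move: neq; rewrite (uniq_block _ _ _ S1M S2M k1 k2) eqxx.
  + by apply/negP => /blocks[]; rewrite cards0.
Qed.

Lemma pairing_sub M P S : pairing M P -> S \in M -> S \subset P.
Proof. by case=> blocks _ _ /blocks[]. Qed.

Lemma pairingU M1 M2 P1 P2 : [disjoint P1 & P2] ->
  pairing M1 P1 -> pairing M2 P2 -> pairing (M1 :|: M2) (P1 :|: P2).
Proof.
move=> dis [a1 a2 a3] [c1 c2 c3].
have cross S1 S2 k : S1 \in M1 -> S2 \in M2 -> k \in S1 -> k \in S2 -> False.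
  move=> /a1[_ /subsetP s1] /c1[_ /subsetP s2] /s1 k1 /s2 k2.
  by move/disjointFr: dis => /(_ k k1); rewrite k2.
split.
- move=> S; rewrite inE => /orP[/a1|/c1] [-> sub]; split => //.
    exact: subset_trans sub (subsetUl _ _).
  exact: subset_trans sub (subsetUr _ _).
- move=> k; rewrite inE => /orP[/a2|/c2] [S SM kS]; exists S => //.
    by rewrite inE SM.
  by rewrite inE SM orbT.
- move=> S1 S2 k; rewrite !inE => /orP[] h1 /orP[] h2 k1 k2.
  + exact: a3 h1 h2 k1 k2.
  + by case: (cross _ _ _ h1 h2 k1 k2).
  + by case: (cross _ _ _ h2 h1 k2 k1).
  + exact: c3 h1 h2 k1 k2.
Qed.

(* The block of M containing k (empty if there is none). *)
Definition block M k : {set T} := odflt set0 [pick S in M | k \in S].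

Lemma block_in M P k : pairing M P -> k \in P -> block M k \in M /\ k \in block M k.
Proof.
case=> _ cover _ kP; rewrite /block; case: pickP => [S /andP[]//|/= none].
by case: (cover k kP) => S SM kS; move: (none S); rewrite SM kS.
Qed.

Lemma block_out M P k : pairing M P -> k \notin P -> block M k = set0.
Proof.
case=> blocks _ _ kP; rewrite /block; case: pickP => [S /andP[SM kS]|//] /=.
by case: (blocks S SM) => _ /subsetP/(_ k kS); rewrite (negbTE kP).
Qed.

Lemma pairingD1 M P S : pairing M P -> S \in M -> pairing (M :\ S) (P :\: S).
Proof.
move=> hp SM; have [blocks cover uniq_block] := hp.
split.
- move=> S'; rewrite !inE => /andP[nS' S'M]; have [c2 sub] := blocks S' S'M.
  split => //; apply/subsetP => k kS'; rewrite inE (subsetP sub k kS') andbT.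
  by apply: contra nS' => kS; rewrite (uniq_block _ _ _ S'M SM kS' kS).
- move=> k; rewrite inE => /andP[nkS /cover[S' S'M kS']]; exists S' => //.
  by rewrite !inE S'M andbT; apply: contraNneq nkS => <-.
- move=> S1 S2 k; rewrite !inE => /andP[_ S1M] /andP[_ S2M]; exact: uniq_block.
Qed.

Lemma pairing1 S : #|S| = 2%N -> pairing [set S] S.
Proof.
move=> c2; split.
- by move=> S'; rewrite inE => /eqP->.
- by move=> k kS; exists S; rewrite ?inE.
- by move=> S1 S2 k; rewrite !inE => /eqP-> /eqP->.
Qed.

End Pairings.

Section Contraction.
Variables (T : finType) (i j : T).
Hypothesis neq_ij : i != j.
Implicit Types (M : {set {set T}}) (P S : {set T}) (k : T).

Definition merged M : {set T} := (block M i :|: block M j) :\ i :\ j.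

Definition contract M : {set {set T}} :=
  if block M i == block M j then M :\ block M i
  else (M :\ block M i :\ block M j) :|: [set merged M].

Section ContractPairing.
Variables (M : {set {set T}}) (P : {set T}).
Hypotheses (hp : pairing M P) (eqP_ij : (i \in P) = (j \in P)).

Lemma distinct_blocks : block M i != block M j ->
  [/\ i \in P, j \in P, block M i \in M, block M j \in M &
      [/\ i \in block M i, j \in block M j & [disjoint block M i & block M j]]].
Proof.
move=> neq; have iP : i \in P.
  apply: contraNT neq => iP; have jP : j \notin P by rewrite -eqP_ij.
  by rewrite (block_out hp iP) (block_out hp jP).
have jP : j \in P by rewrite -eqP_ij.
have [biM ibi] := block_in hp iP; have [bjM jbj] := block_in hp jP.
split => //; split => //; apply/pred0P => k /=; apply/negP => /andP[ki kj].
by case: hp => _ _ /(_ _ _ k biM bjM ki kj) eq; rewrite eq eqxx in neq.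
Qed.

(* If i and j share a block, that block is {i, j} (or i, j lie outside P)
   and removing it contracts the pairing. *)
Lemma contract_same : block M i = block M j -> pairing (contract M) (P :\ i :\ j).
Proof.
move=> eq_b; rewrite /contract eq_b eqxx; case: (boolP (i \in P)) => iP.
  have jP : j \in P by rewrite -eqP_ij.
  have [biM ibi] := block_in hp iP; have [_ jbj] := block_in hp jP.
  rewrite -eq_b in jbj *.
  have [blocks _ _] := hp; have [c2 _] := blocks _ biM.
  have eq_ij : block M i = [set i; j].
    apply/esym/eqP; rewrite eqEcard cards2 neq_ij c2 leqnn andbT.
    by apply/subsetP => k; rewrite !inE => /orP[]/eqP->.
  rewrite eq_ij in biM *.
  have -> : P :\ i :\ j = P :\: [set i; j].
    by apply/setP => k; rewrite !inE negb_or andbA [(k != i) && _]andbC.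
  exact: pairingD1.
have jP : j \notin P by rewrite -eqP_ij.
rewrite -eq_b (block_out hp iP).
have -> : M :\ set0 = M.
  apply/setP => S; rewrite !inE andb_idl // => SM; apply: contraTneq SM => ->.
  by apply/negP; case: hp => /(_ set0) blocks _ _ /blocks[]; rewrite cards0.
have -> : P :\ i :\ j = P.
  apply/setP => k; rewrite !inE; case: (k =P j) => [->|_]; first by rewrite (negbTE jP).
  by case: (k =P i) => [->|_]; rewrite ?(negbTE iP).
exact: hp.
Qed.

(* If i and j lie in different blocks, the remaining blocks pair the rest of
   P and the merged block is a 2-set covering the other two points. *)
Lemma contract_merge : block M i != block M j -> pairing (contract M) (P :\ i :\ j).
Proof.
move=> neq; rewrite /contract (negbTE neq).
have [iP jP biM bjM [ibi jbj dis]] := distinct_blocks neq.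
have [blocks _ _] := hp; have [ci si] := blocks _ biM; have [cj sj] := blocks _ bjM.
have bjM' : block M j \in M :\ block M i by rewrite !inE eq_sym neq.
have rest := pairingD1 (pairingD1 hp biM) bjM'.
have c_merged : #|merged M| = 2%N.
  have : #|block M i :|: block M j| = 4%N.
    by rewrite cardsU ci cj (disjoint_setI0 dis) cards0.
  rewrite (cardsD1 i) (cardsD1 j (_ :\ i)) !inE ibi jbj eq_sym neq_ij orbT /=.
  by move=> [].
have -> : P :\ i :\ j = (P :\: block M i :\: block M j) :|: merged M.
  apply/setP => k; rewrite !inE; case: (boolP (k \in block M i)) => kbi.
    by rewrite (subsetP si k kbi) (disjointFr dis kbi) /= !andbT.
  case: (boolP (k \in block M j)) => kbj; first by rewrite (subsetP sj k kbj) /= !andbT.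
  have nki : k != i by apply: contraNneq kbi => ->.
  have nkj : k != j by apply: contraNneq kbj => ->.
  by rewrite nki nkj /= orbF.
apply: pairingU rest (pairing1 c_merged).
have sub : merged M \subset block M i :|: block M j.
  exact: subset_trans (subsetDl _ _) (subsetDl _ _).
rewrite disjoint_sym; apply: disjointWl sub _; apply/pred0P => k /=.
by rewrite !inE; case: (k \in block M i); case: (k \in block M j).
Qed.

Lemma contract_pairing : pairing (contract M) (P :\ i :\ j).
Proof.
by case: (block M i =P block M j) => [/contract_same|/eqP/contract_merge].
Qed.

End ContractPairing.

Lemma mem_contract M S : S \in contract M -> S \notin M ->
  block M i != block M j /\ S = merged M.
Proof.
rewrite /contract; case: eqP => [_|/eqP neq]; first by rewrite inE => /andP[_ ->].
by rewrite !inE => /orP[/and3P[_ _ ->]|/eqP->].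
Qed.

End Contraction.

Section WindableOn.
Variable J : finType.
Implicit Types (D : {set J}) (x y z s : {ffun J -> bool}).

Definition match_on D z : {set {set {set J}}} :=
  [set M : {set {set J}} | partition M [set k in D | z k] &&
                           [forall S in M, #|S| == 2]].

Lemma match_onP D z M : M \in match_on D z <-> pairing M [set k in D | z k].
Proof. by rewrite inE; apply: pairingP. Qed.

Lemma match_on_eq D z z' : {in D, z =1 z'} -> match_on D z = match_on D z'.
Proof.
move=> eq_z; rewrite /match_on.
suff -> : [set k in D | z k] = [set k in D | z' k] by [].
by apply/setP => k; rewrite !inE; case kD: (k \in D); rewrite // eq_z.
Qed.

Lemma bxor_cancel x y s : bxor (bxor x s) (bxor y s) = bxor x y.
Proof. by apply/ffunP => k; rewrite !ffunE; case: (x k); case: (y k); case: (s k). Qed.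

Lemma bxor_chi_out D (S : {set J}) x :
  [disjoint S & D] -> {in D, bxor x (chi S) =1 x}.
Proof. by move=> dis k kD; rewrite !ffunE (disjointFl dis kD) addbF. Qed.

Definition depends_on (R : Type) D (g : {ffun J -> bool} -> R) : Prop :=
  forall x x', {in D, x =1 x'} -> g x = g x'.

Definition windable_on D (G : {ffun J -> bool} -> rat) : Prop :=
  (forall x, 0 <= G x) /\ depends_on D G /\
  exists B : {ffun J -> bool} -> {ffun J -> bool} -> {set {set J}} -> rat,
    [/\ forall x y M, M \in match_on D (bxor x y) -> 0 <= B x y M,
        forall x y, G x * G y = \sum_(M in match_on D (bxor x y)) B x y M,
        forall x y M S, M \in match_on D (bxor x y) -> S \in M ->
           B x y M = B (bxor x (chi S)) (bxor y (chi S)) M &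
        forall M x x' y y', {in D, x =1 x'} -> {in D, y =1 y'} ->
           B x y M = B x' y' M].

Lemma windable_on_ext D D' G G' : D = D' -> G =1 G' ->
  windable_on D G -> windable_on D' G'.
Proof.
move=> <- eG [G_ge0 [G_dep [B [B_ge0 B_sum B_wind B_dep]]]].
split; first by move=> x; rewrite -eG.
split; first by move=> x x' e; rewrite -!eG; apply: G_dep.
by exists B; split => // x y; rewrite -!eG.
Qed.

Lemma windable_on1 : windable_on set0 (fun _ => 1).
Proof.
have match0 z : match_on set0 z = [set set0].
  have P0 : [set k in set0 | z k] = set0 by apply/setP => k; rewrite !inE.
  apply/setP => M; rewrite in_set1; apply/idP/idP.
  - move/match_onP; rewrite P0 => -[blocks _ _]; apply/eqP/setP => S; rewrite inE.
    by apply/negP => /blocks[c2 /subset_leq_card]; rewrite c2 cards0.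
  - move/eqP->; apply/match_onP; rewrite P0.
    by split => [S|k|S1 S2 k]; rewrite inE.
split; first by move=> x; rewrite ler01.
split; first by [].
exists (fun _ _ M => (M == set0)%:R); split.
- by move=> x y M _; rewrite ler0n.
- by move=> x y; rewrite match0 big_set1 eqxx mulr1.
- by move=> x y M S; rewrite match0 inE => /eqP ->; rewrite inE.
- by [].
Qed.

Lemma match_onU D1 D2 z M1 M2 : [disjoint D1 & D2] ->
  M1 \in match_on D1 z -> M2 \in match_on D2 z ->
  M1 :|: M2 \in match_on (D1 :|: D2) z.
Proof.
move=> dis /match_onP h1 /match_onP h2; apply/match_onP.
have -> : [set k in D1 :|: D2 | z k] = [set k in D1 | z k] :|: [set k in D2 | z k].
  by apply/setP => k; rewrite !inE andb_orl.
apply: pairingU h1 h2; apply/pred0P => k /=; rewrite !inE.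
by case k1: (k \in D1); rewrite //= (disjointFr dis k1) andbF.
Qed.

Lemma match_on_sub D z M S : M \in match_on D z -> S \in M -> S \subset D.
Proof.
move=> /match_onP /pairing_sub sub /sub /subset_trans; apply.
by apply/subsetP => k; rewrite inE => /andP[].
Qed.

(* Products over disjoint sets: the coefficient of M is the sum of
   B1 M1 * B2 M2 over the decompositions M = M1 :|: M2 into windings. *)
Lemma windable_onM D1 D2 G1 G2 : [disjoint D1 & D2] ->
  windable_on D1 G1 -> windable_on D2 G2 ->
  windable_on (D1 :|: D2) (fun x => G1 x * G2 x).
Proof.
move=> dis [G1_ge0 [G1_dep [B1 [B1_ge0 B1_sum B1_wind B1_dep]]]]
           [G2_ge0 [G2_dep [B2 [B2_ge0 B2_sum B2_wind B2_dep]]]].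
have inD1 k : k \in D1 -> k \in D1 :|: D2 by rewrite inE => ->.
have inD2 k : k \in D2 -> k \in D1 :|: D2 by rewrite inE orbC => ->.
split; first by move=> x; apply: mulr_ge0.
split.
  move=> x x' e; rewrite (G1_dep x x') ?(G2_dep x x') // => k kD; apply: e.
    exact: inD2.
  exact: inD1.
pose B x y M := \sum_(M1 in match_on D1 (bxor x y))
  \sum_(M2 in match_on D2 (bxor x y) | M1 :|: M2 == M) B1 x y M1 * B2 x y M2.
exists B; split.
- move=> x y M _; apply: sumr_ge0 => M1 h1; apply: sumr_ge0 => M2 /andP[h2 _].
  by apply: mulr_ge0; [apply: B1_ge0 | apply: B2_ge0].
- move=> x y; rewrite mulrACA B1_sum B2_sum big_distrlr /= /B [RHS]exchange_big /=.
  apply: eq_bigr => M1 h1.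
  pose D12 := match_on (D1 :|: D2) (bxor x y).
  rewrite (partition_big (fun M2 => M1 :|: M2) (mem D12)) //=.
  by move=> M2 h2; apply: match_onU.
- move=> x y M S _ SM; rewrite /B bxor_cancel; apply: eq_bigr => M1 h1.
  apply: eq_bigr => M2 /andP[h2 /eqP eM]; move: SM; rewrite -eM inE => /orP[] SM.
  + have disS : [disjoint S & D2] := disjointWl (match_on_sub h1 SM) dis.
    rewrite (B1_wind _ _ _ _ h1 SM); congr (_ * _).
    by apply: B2_dep => k kD; rewrite !(bxor_chi_out _ disS kD).
  + have disS : [disjoint S & D1].
      by rewrite disjoint_sym in dis; apply: disjointWl (match_on_sub h2 SM) dis.
    rewrite (B2_wind _ _ _ _ h2 SM); congr (_ * _).
    by apply: B1_dep => k kD; rewrite !(bxor_chi_out _ disS kD).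
- move=> M x x' y y' ex ey; rewrite /B.
  have exy : {in D1 :|: D2, bxor x y =1 bxor x' y'}.
    by move=> k kD; rewrite !ffunE ex ?ey.
  rewrite (match_on_eq (fun k kD => exy k (inD1 k kD))).
  rewrite (match_on_eq (fun k kD => exy k (inD2 k kD))).
  apply: eq_bigr => M1 _; apply: eq_bigr => M2 _; congr (_ * _).
    by apply: B1_dep => k kD; rewrite (ex, ey) ?inD1.
  by apply: B2_dep => k kD; rewrite (ex, ey) ?inD2.
Qed.

End WindableOn.

(* Setting the coordinates i and j of x to a common value b; in comments
   this is written x_b. *)
Section SetEdge.
Variables (J : finType) (i j : J).
Implicit Types (D : {set J}) (x y s : {ffun J -> bool}).

Definition set_edge x (b : bool) : {ffun J -> bool} :=
  [ffun k => if (k == i) || (k == j) then b else x k].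

Lemma set_edge_bxor x y s b c :
  bxor (set_edge (bxor x s) b) (set_edge (bxor y s) c) =
  bxor (set_edge x b) (set_edge y c).
Proof.
apply/ffunP => k; rewrite !ffunE; case: ifP => // _.
by case: (x k); case: (y k); case: (s k).
Qed.

Lemma set_edge_negb x y b c :
  bxor (set_edge x (~~ b)) (set_edge y (~~ c)) = bxor (set_edge x b) (set_edge y c).
Proof. by apply/ffunP => k; rewrite !ffunE; case: ifP => // _; case: b; case: c. Qed.

Lemma set_edge_chi x b (S : {set J}) : i \notin S -> j \notin S ->
  bxor (set_edge x b) (chi S) = set_edge (bxor x (chi S)) b.
Proof.
move=> iS jS; apply/ffunP => k; rewrite !ffunE.
case: (k =P i) => [->|_]; first by rewrite (negbTE iS) addbF.
by case: (k =P j) => [->|_]; first by rewrite (negbTE jS) addbF.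
Qed.

Lemma set_edge_eq D x x' b :
  {in D :\ i :\ j, x =1 x'} -> {in D, set_edge x b =1 set_edge x' b}.
Proof.
move=> e k kD; rewrite !ffunE; case: ifP => // /norP[ki kj].
by apply: e; rewrite !inE ki kj.
Qed.

Lemma set_edge_chi2 x b (Si Sj : {set J}) : i \in Si -> j \in Sj ->
  [disjoint Si & Sj] ->
  bxor (bxor (set_edge x b) (chi Si)) (chi Sj) =
  set_edge (bxor x (chi ((Si :|: Sj) :\ i :\ j))) (~~ b).
Proof.
move=> iSi jSj dis; apply/ffunP => k; rewrite !ffunE !inE.
case: (k =P i) => [->|_]; first by rewrite iSi (disjointFr dis iSi) /=; case: b.
case: (k =P j) => [->|_]; first by rewrite jSj (disjointFl dis jSj) /=; case: b.
case: (boolP (k \in Si)) => kSi; first by rewrite (disjointFr dis kSi) /= addbF.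
by rewrite addbF.
Qed.

Hypothesis neq_ij : i != j.

Lemma contract_match D x y b c M : i \in D -> j \in D ->
  M \in match_on D (bxor (set_edge x b) (set_edge y c)) ->
  contract i j M \in match_on (D :\ i :\ j) (bxor x y).
Proof.
move=> iD jD /match_onP hp; apply/match_onP.
have -> : [set k in D :\ i :\ j | bxor x y k] =
          [set k in D | bxor (set_edge x b) (set_edge y c) k] :\ i :\ j.
  apply/setP => k; rewrite !inE !ffunE.
  by case: (k =P j) => //= _; case: (k =P i).
apply: contract_pairing hp _ => //.
by rewrite !inE iD jD !ffunE !eqxx /= orbT.
Qed.

End SetEdge.

(* The
   coefficient of a winding M' of x and y sums the coefficients of all
   windings M of x_b and y_c (over b, c) whose contraction is M'. *)
Section ContractWindable.
Variables (J : finType) (i j : J) (D : {set J}).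
Variables (G : {ffun J -> bool} -> rat)
          (B : {ffun J -> bool} -> {ffun J -> bool} -> {set {set J}} -> rat).
Hypotheses (neq_ij : i != j) (iD : i \in D) (jD : j \in D).
Hypothesis B_ge0 : forall x y M, M \in match_on D (bxor x y) -> 0 <= B x y M.
Hypothesis B_sum : forall x y, G x * G y = \sum_(M in match_on D (bxor x y)) B x y M.
Hypothesis B_wind : forall x y M S, M \in match_on D (bxor x y) -> S \in M ->
  B x y M = B (bxor x (chi S)) (bxor y (chi S)) M.
Hypothesis B_dep : forall M (x x' y y' : {ffun J -> bool}),
  {in D, x =1 x'} -> {in D, y =1 y'} -> B x y M = B x' y' M.
Implicit Types (x y : {ffun J -> bool}) (M : {set {set J}}).

Definition edge_coeff x y M : rat :=
  \sum_(b : bool)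
    \sum_(c : bool | M \in match_on D (bxor (set_edge i j x b) (set_edge i j y c)))
      B (set_edge i j x b) (set_edge i j y c) M.

Definition contracted_coeff x y M' : rat :=
  \sum_(M | contract i j M == M') edge_coeff x y M.

Lemma contracted_coeff_ge0 x y M' : 0 <= contracted_coeff x y M'.
Proof.
apply: sumr_ge0 => M _; apply: sumr_ge0 => b _; apply: sumr_ge0 => c hc.
exact: B_ge0.
Qed.

(* Expanding the product of the two sums over b and c, and grouping the
   windings M of x_b, y_c according to their contraction. *)
Lemma contracted_sum x y :
  (\sum_(b : bool) G (set_edge i j x b)) * (\sum_(c : bool) G (set_edge i j y c)) =
  \sum_(M' in match_on (D :\ i :\ j) (bxor x y)) contracted_coeff x y M'.
Proof.
pose xb b := set_edge i j x b; pose yc c := set_edge i j y c.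
rewrite big_distrlr /=.
transitivity (\sum_(b : bool) \sum_(c : bool) \sum_(M' in match_on (D :\ i :\ j) (bxor x y))
    \sum_(M in match_on D (bxor (xb b) (yc c)) | contract i j M == M') B (xb b) (yc c) M).
  apply: eq_bigr => b _; apply: eq_bigr => c _; rewrite B_sum.
  by apply: partition_big => M; apply: contract_match.
rewrite (eq_bigr _ (fun b _ => exchange_big _ _ _ _ _ _)) /= exchange_big.
apply: eq_bigr => M' _; rewrite /contracted_coeff /edge_coeff [RHS]exchange_big.
apply: eq_bigr => b _.
rewrite (exchange_big_dep (fun M => contract i j M == M')) /=; last by move=> c M _ /andP[].
by apply: eq_bigr => M eqM; apply: eq_bigl => c; rewrite eqM andbT.
Qed.

Lemma edge_coeff_shift x y s M : edge_coeff (bxor x s) (bxor y s) M =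
  \sum_(b : bool)
    \sum_(c : bool | M \in match_on D (bxor (set_edge i j x b) (set_edge i j y c)))
      B (set_edge i j (bxor x s) b) (set_edge i j (bxor y s) c) M.
Proof. by apply: eq_bigr => b _; apply: eq_bigl => c; rewrite set_edge_bxor. Qed.

Lemma edge_coeff_kept x y M S : S \in M -> i \notin S -> j \notin S ->
  edge_coeff (bxor x (chi S)) (bxor y (chi S)) M = edge_coeff x y M.
Proof.
move=> SM iS jS; rewrite edge_coeff_shift; apply: eq_bigr => b _; apply: eq_bigr => c hc.
by rewrite (B_wind hc SM) !set_edge_chi.
Qed.

(* Winding along the merged block amounts to winding along the blocks of i
   and of j, which flips the edge values b and c. *)
Lemma edge_coeff_merged x y M : block M i != block M j ->
  edge_coeff (bxor x (chi (merged i j M))) (bxor y (chi (merged i j M))) M =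
  edge_coeff x y M.
Proof.
move=> neq; rewrite edge_coeff_shift [RHS](reindex_inj (inv_inj negbK)) /=.
apply: eq_bigr => b _; rewrite [RHS](reindex_inj (inv_inj negbK)) /=.
apply: eq_big => [c|c hc]; first by rewrite set_edge_negb.
have /match_onP hp := hc.
have eqP_ij : (i \in [set k in D | bxor (set_edge i j x b) (set_edge i j y c) k]) =
              (j \in [set k in D | bxor (set_edge i j x b) (set_edge i j y c) k]).
  by rewrite !inE iD jD !ffunE !eqxx /= orbT.
have [_ _ biM bjM [ibi jbj dis]] := distinct_blocks hp eqP_ij neq.
have hcN : M \in match_on D (bxor (set_edge i j x (~~ b)) (set_edge i j y (~~ c))).
  by rewrite set_edge_negb.
have hcN' : M \in match_on D (bxor (bxor (set_edge i j x (~~ b)) (chi (block M i)))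
                                  (bxor (set_edge i j y (~~ c)) (chi (block M i)))).
  by rewrite bxor_cancel.
by rewrite (B_wind hcN biM) (B_wind hcN' bjM) !set_edge_chi2 ?negbK.
Qed.

(* A block of the contraction is a kept block or the merged block. *)
Lemma contracted_coeff_wind x y M' S :
  M' \in match_on (D :\ i :\ j) (bxor x y) -> S \in M' ->
  contracted_coeff x y M' = contracted_coeff (bxor x (chi S)) (bxor y (chi S)) M'.
Proof.
move=> hM' SM'; apply: eq_bigr => M /eqP eqM.
have /subsetP subS := match_on_sub hM' SM'.
have iS : i \notin S by apply/negP => /subS; rewrite !inE eqxx andbF.
have jS : j \notin S by apply/negP => /subS; rewrite !inE eqxx.
case: (boolP (S \in M)) => SM; first by rewrite edge_coeff_kept.
have SMc : S \in contract i j M by rewrite eqM.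
by have [neq ->] := mem_contract SMc SM; rewrite edge_coeff_merged.
Qed.

Lemma contracted_coeff_dep M' x x' y y' :
  {in D :\ i :\ j, x =1 x'} -> {in D :\ i :\ j, y =1 y'} ->
  contracted_coeff x y M' = contracted_coeff x' y' M'.
Proof.
move=> ex ey; apply: eq_bigr => M _; apply: eq_bigr => b _.
have exb := set_edge_eq b ex; have eyc c := set_edge_eq c ey.
apply: eq_big => [c|c _]; last exact: B_dep.
rewrite (@match_on_eq _ D _ (bxor (set_edge i j x' b) (set_edge i j y' c))) // => k kD.
by move: (exb k kD) (eyc c k kD); rewrite !ffunE => -> ->.
Qed.

End ContractWindable.

Lemma windable_on_contract (J : finType) (i j : J) (D : {set J}) G :
  i != j -> i \in D -> j \in D -> windable_on D G ->
  windable_on (D :\ i :\ j) (fun x => \sum_(b : bool) G (set_edge i j x b)).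
Proof.
move=> neq iD jD [G_ge0 [G_dep [B [B_ge0 B_sum B_wind B_dep]]]].
split; first by move=> x; apply: sumr_ge0 => b _.
split; first by move=> x x' e; apply: eq_bigr => b _; apply/G_dep/set_edge_eq.
exists (contracted_coeff i j D B); split.
- by move=> x y M' _; apply: contracted_coeff_ge0.
- by move=> x y; apply: contracted_sum.
- by move=> x y M' S; apply: contracted_coeff_wind.
- by move=> M' x x' y y'; apply: contracted_coeff_dep.
Qed.

(* Transfer along an injection f : I -> J with image D: windings on I and
   windings relative to D correspond through the image of blocks. *)
Section Transfer.
Variables (I J : finType) (f : I -> J) (D : {set J}).
Hypotheses (f_inj : injective f) (fD : forall i, f i \in D).
Hypothesis Df : forall k, k \in D -> exists i, k = f i.
Implicit Types (x y z : {ffun J -> bool}).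

Definition pullback z : {ffun I -> bool} := [ffun i => z (f i)].
Definition push_pairing (M : {set {set I}}) : {set {set J}} :=
  [set f @: S | S : {set I} in M].
Definition pull_pairing (M : {set {set J}}) : {set {set I}} :=
  [set f @^-1: S | S : {set J} in M].

Lemma pullback_bxor x y : pullback (bxor x y) = bxor (pullback x) (pullback y).
Proof. by apply/ffunP => i; rewrite !ffunE. Qed.

Lemma preimK (S : {set I}) : f @^-1: (f @: S) = S.
Proof. by apply/setP => i; rewrite inE mem_imset. Qed.

Lemma imK (S : {set J}) : S \subset D -> f @: (f @^-1: S) = S.
Proof.
move=> /subsetP sub; apply/setP => k; apply/imsetP/idP => [[i]|kS].
  by rewrite inE => ? ->.
by case: (Df (sub k kS)) => i ki; exists i; rewrite // inE -ki.
Qed.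

Lemma pull_pushK : cancel push_pairing pull_pairing.
Proof.
move=> M; apply/setP => S; apply/imsetP/idP => [[S' /imsetP[S0 S0M ->] ->]|SM].
  by rewrite preimK.
by exists (f @: S); [apply: imset_f | rewrite preimK].
Qed.

Lemma push_pullK (M : {set {set J}}) : (forall S, S \in M -> S \subset D) ->
  push_pairing (pull_pairing M) = M.
Proof.
move=> sub; apply/setP => S; apply/imsetP/idP => [[S' /imsetP[S0 S0M ->] ->]|SM].
  by rewrite imK // sub.
by exists (f @^-1: S); [apply: imset_f | rewrite imK // sub].
Qed.

Lemma push_pairingP (M : {set {set I}}) z :
  pairing (push_pairing M) [set k in D | z k] <-> pairing M [set i | pullback z i].
Proof.
split=> -[a1 a2 a3]; split.
- move=> S SM; have := a1 (f @: S) (imset_f _ SM).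
  rewrite card_imset // => -[c /subsetP sub].
  split => //; apply/subsetP => i iS; have := sub (f i) (imset_f _ iS).
  by rewrite !inE ffunE => /andP[].
- move=> i; rewrite inE ffunE => zi.
  have : f i \in [set k in D | z k] by rewrite inE fD.
  by case/a2 => S' /imsetP[S SM ->]; rewrite mem_imset // => iS; exists S.
- move=> S1 S2 i S1M S2M i1 i2; apply: (imset_inj f_inj).
  by apply: (a3 _ _ (f i)); rewrite ?imset_f.
- move=> S' /imsetP[S SM ->]; case: (a1 S SM) => c /subsetP sub.
  split; first by rewrite card_imset.
  by apply/subsetP => k /imsetP[i iS ->]; move: (sub i iS); rewrite !inE ffunE fD.
- move=> k; rewrite inE => /andP[kD zk]; case: (Df kD) => i ki.
  have : i \in [set i | pullback z i] by rewrite inE ffunE -ki.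
  by case/a2 => S SM iS; exists (f @: S); rewrite ?imset_f // ki imset_f.
- move=> S1' S2' k /imsetP[S1 S1M ->] /imsetP[S2 S2M ->] /imsetP[i1 i1S ->].
  by rewrite mem_imset // => i2S; rewrite (a3 _ _ _ S1M S2M i1S i2S).
Qed.

Lemma Match_pullback z : push_pairing @: Match (pullback z) = match_on D z.
Proof.
apply/setP => M'; apply/imsetP/idP => [[M]|hM'].
  by rewrite inE => /pairingP hM ->; apply/match_onP/push_pairingP.
have sub S : S \in M' -> S \subset D by apply: match_on_sub hM'.
exists (pull_pairing M'); last by rewrite push_pullK.
rewrite inE; apply/pairingP/push_pairingP; rewrite push_pullK //.
exact/match_onP.
Qed.

Lemma sum_Match_pullback z (g : {set {set J}} -> rat) :
  \sum_(M in Match (pullback z)) g (push_pairing M) = \sum_(M' in match_on D z) g M'.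
Proof.
by rewrite -Match_pullback big_imset // => M1 M2 _ _; apply: (can_inj pull_pushK).
Qed.

Lemma windable_on_pullback (F : {ffun I -> bool} -> rat) :
  even_windable F -> windable_on D (fun x => F (pullback x)).
Proof.
case=> F_ge0 [B [B_ge0 B_sum B_wind]].
have pullM z M' : M' \in match_on D z ->
    pull_pairing M' \in Match (pullback z) /\ push_pairing (pull_pairing M') = M'.
  by rewrite -Match_pullback => /imsetP[M0 M0in ->]; rewrite pull_pushK.
split => //; split.
  by move=> x x' e; congr F; apply/ffunP => i; rewrite !ffunE e.
exists (fun x y M' => B (pullback x) (pullback y) (pull_pairing M')); split.
- by move=> x y M' /pullM[]; rewrite pullback_bxor => /B_ge0.
- move=> x y; rewrite B_sum -pullback_bxor -sum_Match_pullback.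
  by apply: eq_bigr => M _; rewrite pull_pushK.
- move=> x y M' S' hM' S'M; case: (pullM _ _ hM'); rewrite pullback_bxor => hM eM.
  move: S'M; rewrite -{1}eM => /imsetP[S SM ->].
  have chi_pull w : pullback (bxor w (chi (f @: S))) = bxor (pullback w) (chi S).
    by apply/ffunP => i; rewrite !ffunE mem_imset.
  by rewrite !chi_pull; apply: B_wind.
- by move=> M x x' y y' ex ey; congr B; apply/ffunP => i; rewrite !ffunE ?ex ?ey.
Qed.

Lemma even_windable_extend (G : {ffun J -> bool} -> rat)
    (ext : {ffun I -> bool} -> {ffun J -> bool}) :
  cancel ext pullback -> windable_on D G -> even_windable (fun xa => G (ext xa)).
Proof.
move=> extK [G_ge0 [_ [B [B_ge0 B_sum B_wind B_dep]]]].
have ext_f w i : ext w (f i) = w i by rewrite -{2}(extK w) ffunE.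
have pushM xa ya M : M \in Match (bxor xa ya) ->
    push_pairing M \in match_on D (bxor (ext xa) (ext ya)).
  by move=> hM; rewrite -Match_pullback pullback_bxor !extK imset_f.
split => //.
exists (fun xa ya M => B (ext xa) (ext ya) (push_pairing M)); split.
- by move=> xa ya M /pushM /B_ge0.
- by move=> xa ya; rewrite B_sum -sum_Match_pullback pullback_bxor !extK.
- move=> xa ya M S hM SM.
  rewrite (B_wind _ _ _ (f @: S) (pushM _ _ _ hM)); last exact: imset_f.
  have chi_ext w : {in D, bxor (ext w) (chi (f @: S)) =1 ext (bxor w (chi S))}.
    by move=> k /Df[i ->]; rewrite !ffunE mem_imset // !ext_f !ffunE.
  by apply: B_dep; apply: chi_ext.
Qed.

End Transfer.

Lemma even_windable_ext (I : finType) (F F' : {ffun I -> bool} -> rat) :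
  F =1 F' -> even_windable F -> even_windable F'.
Proof.
move=> eF [F_ge0 [B [B_ge0 B_sum B_wind]]]; split; first by move=> x; rewrite -eF.
by exists B; split => // x y; rewrite -!eF.
Qed.

Section Circuit.
Variables (J V : finType) (vert : J -> V) (A : {set J}) (E : {set {set J}}).
(* F is declared with an explicit vertex argument, as in [lemma7]. *)
Unset Implicit Arguments.
Variable F : forall v : V, {ffun Jv vert v -> bool} -> rat.
Set Implicit Arguments.
Hypothesis edgesE : internal_edges A E.
Hypothesis windF : forall v : V, even_windable (F v).
Implicit Types (x z : {ffun J -> bool}) (s : seq {set J}).

Lemma windable_vertex v :
  windable_on [set j | vert j == v] (fun x => F v (restr vert x v)).
Proof.
apply: windable_on_ext (windable_on_pullback val_inj _ _ (windF v)) => //.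
- by move=> j; rewrite inE (valP j).
- by move=> k; rewrite inE => kv; exists (Sub k kv).
Qed.

Lemma windable_weight_seq (s : seq V) : uniq s ->
  windable_on [set j | vert j \in s] (fun x => \prod_(v <- s) F v (restr vert x v)).
Proof.
elim: s => [_|v s IH] /=.
  apply: windable_on_ext (windable_on1 J) => [|x]; last by rewrite big_nil.
  by apply/setP => k; rewrite !inE.
case/andP => vs us.
have dis : [disjoint [set j | vert j == v] & [set j | vert j \in s]].
  by apply/pred0P => k /=; rewrite !inE; apply/negP => /andP[/eqP-> ks]; rewrite ks in vs.
apply: windable_on_ext (windable_onM dis (windable_vertex v) (IH us)) => [|x].
  by apply/setP => k; rewrite !inE.
by rewrite big_cons.
Qed.

Lemma windable_weight : windable_on setT (wt F).
Proof.
apply: windable_on_ext (windable_weight_seq (index_enum_uniq V)) => //.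
by apply/setP => k; rewrite !inE mem_index_enum.
Qed.

Definition edge_consistent z (e : {set J}) : bool :=
  [forall i in e, forall j in e, z i == z j].

(* The circuit with only the internal edges of s contracted: sum of the
   weights of the z consistent on s that agree with x outside these edges. *)
Definition partial_signature s x : rat :=
  \sum_(z | all (edge_consistent z) s &&
            [forall k, (k \notin \bigcup_(e <- s) e) ==> (z k == x k)]) wt F z.

Lemma edge_value_cond (i j : J) (C : {set J}) z x (b : bool) :
  i \notin C -> j \notin C -> i != j ->
  (edge_consistent z [set i; j] &&
    [forall k, (k \notin [set i; j] :|: C) ==> (z k == x k)] && (z i == b))
  = [forall k, (k \notin C) ==> (z k == set_edge i j x b k)].
Proof.
move=> iC jC neq; apply/idP/idP.
- case/andP => [/andP[cons agree] /eqP zb]; apply/forallP => k; apply/implyP => kC.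
  rewrite ffunE; case: (k =P i) => [->|/eqP ki] /=; first by rewrite zb.
  case: (k =P j) => [->|/eqP kj] /=.
    have /eqP zji := forall_inP (forall_inP cons j (set22 i j)) i (set21 i j).
    by rewrite zji zb.
  by move/forallP: agree => /(_ k); rewrite !inE (negbTE ki) (negbTE kj) (negbTE kC).
- move/forallP => agree.
  have zi : z i = b by move: (agree i); rewrite iC ffunE eqxx => /eqP.
  have zj : z j = b by move: (agree j); rewrite jC ffunE eqxx orbT => /eqP.
  rewrite zi eqxx andbT; apply/andP; split.
    by apply/forall_inP => u; rewrite !inE => /orP[]/eqP->;
       apply/forall_inP => w; rewrite !inE => /orP[]/eqP->; rewrite ?zi ?zj.
  apply/forallP => k; apply/implyP; rewrite !inE negb_or => /andP[/norP[ki kj] kC].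
  by move: (agree k); rewrite kC ffunE (negbTE ki) (negbTE kj).
Qed.

Lemma mem_bigcup_seq s k : reflect (exists2 e, e \in s & k \in e) (k \in \bigcup_(e <- s) e).
Proof. by rewrite bigcup_seq; apply: (iffP bigcupP) => -[e es ke]; exists e. Qed.

(* Contracting the edges of s one at a time keeps windability: the partial
   signature for e :: s is the sum over b of that for s at x_b, for e = {i, j}. *)
Lemma windable_partial_signature s : uniq s -> {subset s <= E} ->
  windable_on (~: \bigcup_(e <- s) e) (partial_signature s).
Proof.
case: edgesE => /and3P[_ trivE _] card2E.
elim: s => [_ _|e s IH] /=.
  apply: windable_on_ext windable_weight; first by rewrite big_nil setC0.
  move=> x; rewrite /partial_signature /= (big_pred1 x) // => z /=.
  rewrite big_nil; apply/forallP/eqP => [agree|->]; last by move=> k; rewrite eqxx implybT.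
  by apply/ffunP => k; move: (agree k); rewrite inE /= => /eqP.
case/andP => es us sub.
have eE : e \in E by apply: sub; rewrite inE eqxx.
have sE : {subset s <= E} by move=> e' h; apply: sub; rewrite inE h orbT.
have /eqP/cards2P[i [j [neq ee]]] := card2E e eE.
have out_cover k : k \in e -> k \notin \bigcup_(e' <- s) e'.
  move=> ke; apply/negP => /mem_bigcup_seq[e' e's ke'].
  have neq' : e != e' by apply: contraNneq es => ->.
  have := trivIsetP trivE e e' eE (sE _ e's) neq'.
  by move/disjointFr => /(_ k ke); rewrite ke'.
have iC : i \notin \bigcup_(e' <- s) e' by apply: out_cover; rewrite ee !inE eqxx.
have jC : j \notin \bigcup_(e' <- s) e' by apply: out_cover; rewrite ee !inE eqxx orbT.
have iD : i \in ~: \bigcup_(e' <- s) e' by rewrite inE.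
have jD : j \in ~: \bigcup_(e' <- s) e' by rewrite inE.
apply: windable_on_ext (windable_on_contract neq iD jD (IH us sE)).
  by apply/setP => k; rewrite big_cons ee !inE negb_or; case: (k =P i); case: (k =P j).
move=> x; rewrite /partial_signature.
rewrite (partition_big (fun z : {ffun J -> bool} => z i) xpredT) //=.
apply: eq_bigr => b _; apply: eq_bigl => z; rewrite big_cons ee.
by rewrite -(edge_value_cond z x b iC jC neq) -!andbA andbCA.
Qed.

Definition extend (xa : {ffun Aext A -> bool}) : {ffun J -> bool} :=
  [ffun k => if insub k is Some a then xa a else false].

Lemma extendK : cancel extend (pullback val).
Proof. by move=> xa; apply/ffunP => a; rewrite !ffunE valK. Qed.

Lemma cover_edges : \bigcup_(e <- enum E) e = ~: A.
Proof.
case: edgesE => /and3P[/eqP cov _ _] _; rewrite -cov bigcup_seq.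
by apply/setP => k; apply/bigcupP/bigcupP => -[e]; rewrite ?mem_enum => ? ?; exists e;
  rewrite ?mem_enum.
Qed.

Lemma signature_extend xa :
  @signature J V vert A E F xa = partial_signature (enum E) (extend xa).
Proof.
apply: eq_bigl => z; rewrite cover_edges; congr andb.
  rewrite /is_assignment; apply/forall_inP/allP => cons e.
    by rewrite mem_enum => eE; exact: cons e eE.
  by move=> eE; apply: cons; rewrite mem_enum.
apply/forallP/forallP => agree k.
  rewrite inE negbK; apply/implyP => kA.
  by move: (agree (Sub k kA)); rewrite ffunE insubT.
by move: (agree (val k)); rewrite inE negbK (valP k) ffunE valK.
Qed.

Lemma windable_signature : windable_on A (partial_signature (enum E)).
Proof.
apply: windable_on_ext (windable_partial_signature (enum_uniq _) _) => //.
  by rewrite cover_edges setCK.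
by move=> e; rewrite mem_enum.
Qed.

End Circuit.

Theorem lemma7 (J V : finType) (vert : J -> V) (A : {set J})
  (E : {set {set J}}) (F : forall v : V, {ffun Jv vert v -> bool} -> rat) :
  internal_edges A E ->
  (forall v : V, even_windable (F v)) ->
  even_windable (@signature J V vert A E F).
Proof.
move=> edgesE windF.
(* Transfer the extended signature, windable on A, back along val : A -> J. *)
have valA (a : Aext A) : val a \in A by apply: valP.
have Aval k : k \in A -> exists a : Aext A, k = val a by move=> kA; exists (Sub k kA).
have := even_windable_extend val_inj valA Aval (extendK (A:=A))
          (windable_signature edgesE windF).
by apply: even_windable_ext => xa; rewrite signature_extend.
Qed.
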